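(* Let $V=(\mathbb F_2)^n$ with $n=bs$, decomposed into bricks $V=V_1\oplus\cdots\oplus V_b$, $\dim V_j=s$. Let $r\ge2$ and $\rho_1,\dots,\rho_r\in\mathrm{Sym}(V)$, and let $\Phi$ be the $r$-round Feistel network whose $i$-th round applies the Feistel operator $\bar\rho_i$. Assume that for every $1\le i\le r$, $0\rho_i=0$ and $\rho_i=\gamma_i\lambda_i$, where \begin{enumerate} \item[a)] $\gamma_i$ is a parallel map whose S-boxes are $2^\delta$-differentially uniform and strongly $(\delta-1)$-anti-invariant, for some $\delta<s$; \item[b)] $\lambda_i$ is a linear strongly proper diffusion layer. \end{enumerate} Suppose there exists a sequence of $r+1$ non-trivial linear partitions $\mathcal L(\mathcal U_1),\dots,\mathcal L(\mathcal U_{r+1})$ of $V\times V$, where each $\mathcal U_i$ is a proper non-trivial subgroup of $V\times V$ and $\mathcal L(\mathcal U_i)\bar\rho_i=\mathcal L(\mathcal U_{i+1})$ for all $1\le i\le r$. For each $i$ let $A_i=\{a\in V\mid (a,c)\in\mathcal U_i\text{ for some }c\in V\}$ and $D_i=\{d\in V\mid (0,d)\in\mathcal U_i\}$. Then none of the following conditions holds: \begin{enumerate} \item there exists $1\le i\le r-1$ such that $\mathcal L(\mathcal U_{i+1})\bar\rho_{i+1}=\mathcal L(\mathcal U_i)$; \item there exists $1\le i\le r-1$ such that $\mathcal U_i=A_i\times D_i$, $\mathcal U_{i+1}=A_{i+1}\times D_{i+1}$ and $\mathcal U_{i+2}=A_{i+2}\times D_{i+2}$; \item there exists $1\le i\le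 r$ such that $D_i=\{0\}$ and $D_{i+1}=\{0\}$; \item there exists $1\le i\le r$ such that $A_i=\{0\}$ and $A_{i+1}=\{0\}$. \end{enumerate}
   Context: Maps act on the right and are composed left to right ($\gamma\lambda$ means first $\gamma$, then $\lambda$); $+$ is bitwise XOR. The Feistel operator induced by $\rho\in\mathrm{Sym}(V)$ is $\bar\rho:V\times V\to V\times V$, $(x_1,x_2)\bar\rho=(x_2,\ x_1+x_2\rho)$. A wall is a subspace $\bigoplus_{j\in I}V_j$ with $\emptyset\ne I\subsetneq\{1,\dots,b\}$. A parallel map is $\gamma\in\mathrm{Sym}(V)$ acting brickwise, $\gamma=(\gamma^{(1)},\dots,\gamma^{(b)})$ with $\gamma^{(j)}\in\mathrm{Sym}(V_j)$ (its S-boxes, viewed as permutations of $(\mathbb F_2)^s$). A linear $\lambda\in\mathrm{GL}(V)$ is a strongly proper diffusion layer if there are no walls $W,W'$ with $W\lambda=W'$. For $f\in\mathrm{Sym}((\mathbb F_2)^s)$ and $a,c\in(\mathbb F_2)^s$ let $\delta_f(a,c)=|\{x\mid xf+(x+a)f=c\}|$; $f$ is $d$-differentially uniform if $d=\max_{a\ne0,\,c}\delta_f(a,c)$. For $1\le\epsilon<s$, $f$ with $0f=0$ is strongly $\epsilon$-anti-invariant if for all proper non-trivial subspaces $U,W$ of $(\mathbb F_2)^s$, $Uf=W$ implies $\dim U=\dim W<s-\epsilon$. For a subgroup $\mathcal U$ of $V\times V$, $\mathcal L(\mathcal U)=\{\mathcal U+v\mid v\in V\times V\}$ (non-trivial if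 neither the partition into singletons nor $\{V\times V\}$), and $\mathcal A f=\{Af\mid A\in\mathcal A\}$ for a partition $\mathcal A$. *)

From HB Require Import structures.
From mathcomp Require Import all_boot all_order all_algebra all_fingroup.
Set Implicit Arguments. Unset Strict Implicit. Unset Printing Implicit Defensive.
Import GRing.Theory.
Local Open Scope ring_scope.

Notation bits s := ('rV['F_2]_s).

(* V = (F_2)^(b*s), represented as b x s matrices: row j is the brick V_j. *)
Notation VV b s := ('M['F_2]_(b, s)).

Definition wall (b s : nat) (I : {set 'I_b}) : {set VV b s} :=
  [set x : VV b s | [forall j, (j \notin I) ==> (row j x == 0)]].

Definition is_wall_index (b : nat) (I : {set 'I_b}) : Prop :=
  I != set0 /\ I != [set: 'I_b].

Definition parallel_with (b s : nat) (g : {perm VV b s}) (S : 'I_b -> {perm bits s}) : Prop :=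
  forall (x : VV b s) (j : 'I_b), row j (g x) = S j (row j x).

(* linear over F_2 (i.e. additive) *)
Definition lin_map (b s : nat) (l : {perm VV b s}) : Prop :=
  forall x y : VV b s, l (x + y) = l x + l y.

Definition strongly_proper (b s : nat) (l : {perm VV b s}) : Prop :=
  lin_map l /\
  ~ (exists I I' : {set 'I_b}, is_wall_index I /\ is_wall_index I' /\
        [set l x | x in wall s I] = wall s I').

Definition ddt (s : nat) (f : {perm bits s}) (a c : bits s) : nat :=
  #|[set x : bits s | f x + f (x + a) == c]|.

Definition diff_uniform (s : nat) (f : {perm bits s}) (d : nat) : Prop :=
  (exists a c : bits s, a != 0 /\ ddt f a c = d) /\
  (forall a c : bits s, a != 0 -> (ddt f a c <= d)%N).

Definition strongly_anti_invariant (s eps : nat) (f : {perm bits s}) : Prop :=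
  (1 <= eps < s)%N /\ f 0 = 0 /\
  forall U W : {vspace bits s},
    U != 0%VS -> U != fullv -> W != 0%VS -> W != fullv ->
    [set f x | x in [set y : bits s | y \in U]] = [set y : bits s | y \in W] ->
    \dim U = \dim W /\ (\dim U < s - eps)%N.

Definition feistel (b s : nat) (rho : {perm VV b s}) (x : VV b s * VV b s)
  : VV b s * VV b s := (x.2, x.1 + rho x.2).

Definition is_subgroup (b s : nat) (U : {set VV b s * VV b s}) : Prop :=
  (0, 0) \in U /\ forall u v, u \in U -> v \in U -> (u.1 + v.1, u.2 + v.2) \in U.

Definition proper_nontrivial (b s : nat) (U : {set VV b s * VV b s}) : Prop :=
  U != [set (0, 0)] /\ U != [set: VV b s * VV b s].

Definition lin_partition (b s : nat) (U : {set VV b s * VV b s})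
  : {set {set VV b s * VV b s}} :=
  [set [set (u.1 + v.1, u.2 + v.2) | u in U] | v : VV b s * VV b s].

Definition part_image (T : finType) (P : {set {set T}}) (f : T -> T) : {set {set T}} :=
  [set [set f x | x in A] | A : {set T} in P].

Definition Aset (b s : nat) (U : {set VV b s * VV b s}) : {set VV b s} :=
  [set a : VV b s | [exists c : VV b s, (a, c) \in U]].

Definition Dset (b s : nat) (U : {set VV b s * VV b s}) : {set VV b s} :=
  [set d : VV b s | (0, d) \in U].

(* An SPN round rho = gamma lambda cannot map the cosets of a proper non-trivial
   subgroup X into cosets of a subgroup Y while another SPN round maps the cosets
   of Y back into cosets of X.  On a brick where X is non-zero, differential
   uniformity of the S-box yields a non-zero a such that S w + S (w + a) lies in
   the brick part of gamma(X) for every w, so that part has more than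
   2^(s - delta) elements; strong anti-invariance then puts the whole brick into
   X and gamma(X).  Hence X is a wall that lambda maps onto the wall Y, which
   strong properness forbids.
   A Feistel round sending L(U) to L(U') satisfies A(U') = B(U), D(U') = C(U) and
   rho (y + x) + rho y + rho x \in D(U') for x \in B(U), where B(U) is the second
   projection of U and C(U) = {c | (c, 0) \in U}.  Conditions 1 and 2 thereby
   produce such pairs of coset-preserving rounds (between B(U_i) and A(U_i),
   D(U_i) and C(U_i), or D(U_i) and D(U_(i+1))); their degenerate outcomes, as
   well as conditions 3 and 4, contradict the properness of U_i or the fact that
   an SPN round is additive in no non-zero direction. *)

From mathcomp Require Import all_boot all_algebra all_fingroup all_field.
From mathcomp Require Import zify.
Set Implicit Arguments. Unset Strict Implicit. Unset Printing Implicit Defensive.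
Local Open Scope ring_scope.
Import GRing.Theory.

Lemma addrr_F2 m n (x : 'M['F_2]_(m, n)) : x + x = 0.
Proof. by apply/matrixP => i j; rewrite !mxE addrr_pchar2 // pchar_Fp. Qed.

Lemma addKr_F2 m n (x y : 'M['F_2]_(m, n)) : x + (x + y) = y.
Proof. by rewrite addrA addrr_F2 add0r. Qed.

Lemma addrK_F2 m n (x y : 'M['F_2]_(m, n)) : y + x + x = y.
Proof. by rewrite -addrA addrr_F2 addr0. Qed.

Lemma addr_eq0_F2 m n (x y : 'M['F_2]_(m, n)) : (x + y == 0) = (x == y).
Proof. by apply/eqP/eqP => [xy0 | ->]; [rewrite -[y]add0r -xy0 addrK_F2 | exact: addrr_F2]. Qed.

Lemma set1_card (T : finType) (x : T) (A : {set T}) :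
  x \in A -> (A == [set x]) = (#|A| == 1%N).
Proof.
move=> xA; apply/eqP/idP => [-> | /cards1P[y defA]]; first by rewrite cards1.
by move: xA; rewrite defA inE => /eqP ->.
Qed.

Lemma setT_card (T : finType) (A : {set T}) : (A == setT) = (#|A| == #|T|).
Proof. by rewrite eqEcard subsetT cardsT eqn_leq max_card. Qed.

Lemma card_bits s : #|{: bits s}| = (2 ^ s)%N.
Proof. by rewrite card_mx card_Fp // mul1n. Qed.

Lemma dim_bits s : dim (bits s) = s.
Proof. by rewrite /dim /= mul1n. Qed.

Lemma addr_closed_vspace s (P : {set bits s}) :
  addr_closed P -> exists W : {vspace bits s}, P = [set v | v \in W].
Proof.
move=> [P0 PD]; exists <<enum P>>%VS; apply/setP => v; rewrite inE.
apply/idP/idP => [vP | /(coord_span (X := in_tuple (enum P))) ->].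
  by rewrite memv_span ?mem_enum.
apply: (big_ind [in P]) => // i _; rewrite /in_mem /=.
have [->|->] : coord (in_tuple (enum P)) i v = 0 \/ coord (in_tuple (enum P)) i v = 1.
- by case: (coord _ i v) => [[|[|]]] // ?; [left|right]; apply: val_inj.
- by rewrite scale0r.
by rewrite scale1r; have := mem_nth 0 (ltn_ord i); rewrite mem_enum.
Qed.

Lemma card_vspace_F2 s (W : {vspace bits s}) : #|[set v | v \in W]| = (2 ^ \dim W)%N.
Proof. by rewrite cardsE card_vspace card_Fp. Qed.

Section SBox.

Variables (s delta : nat) (f : {perm bits s}).
Hypotheses (lt_delta_s : (delta < s)%N) (f_du : diff_uniform f (2 ^ delta)).

Lemma diff_uniform_not_additive c :
  c != 0 -> exists w, f (w + c) + f w + f c != 0.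
Proof.
move=> c0; apply/existsP; apply: contraT; rewrite negb_exists => /forallP f_add.
have := f_du.2 c (f c) c0.
suff -> : ddt f c (f c) = (2 ^ s)%N by rewrite leq_exp2l // leqNgt lt_delta_s.
rewrite -card_bits; apply: eq_card => w; rewrite inE; apply/eqP.
by move/negPn: (f_add w); rewrite addr_eq0_F2 addrC => /eqP.
Qed.

Lemma diff_uniform_card_lb (Q : {set bits s}) a :
  a != 0 -> (forall w, f w + f (w + a) \in Q) -> (2 ^ s <= #|Q :\ 0%R| * 2 ^ delta)%N.
Proof.
move=> a0 fQ; rewrite -sum_nat_const -card_bits -sum1_card.
rewrite (partition_big (fun w => f w + f (w + a)) [in Q :\ 0%R]) => [|w _]; last first.
  rewrite !inE fQ andbT addr_eq0_F2 eq_sym (inj_eq perm_inj) -{2}[w]addr0.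
  by rewrite (inj_eq (addrI w)).
apply: leq_sum => c _; apply: leq_trans (f_du.2 a c a0); rewrite /ddt -sum1_card.
by apply: eq_leq; apply: eq_bigl => w; rewrite inE.
Qed.

Hypothesis f_sai : strongly_anti_invariant delta.-1 f.

Lemma sbox_image_full (P Q : {set bits s}) a :
  addr_closed P -> addr_closed Q -> f @: P = Q -> a != 0 ->
  (forall w, f w + f (w + a) \in Q) -> Q = setT.
Proof.
move=> Pcl Qcl fPQ a0 fQ; have cardQ := diff_uniform_card_lb a0 fQ.
have /andP[d1 _] := f_sai.1.
have [WP defP] := addr_closed_vspace Pcl; have [WQ defQ] := addr_closed_vspace Qcl.
have cardPQ : #|P| = #|Q| by rewrite -fPQ card_imset //; apply: perm_inj.
have cardQ1 : #|Q| = (#|Q :\ 0%R|).+1 by rewrite (cardsD1 0%R Q) Qcl.1.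
apply/eqP; rewrite eqEcard subsetT cardsT card_bits leqNgt; apply/negP => ltQ.
have proper_space (X : {set bits s}) (W : {vspace bits s}) :
    X = [set v | v \in W] -> #|X| = #|Q| -> W != 0%VS /\ W != fullv.
  move=> -> cardX; split; apply: contraTneq isT => W0; move: cardX.
    rewrite W0 card_vspace_F2 dimv0 cardQ1 => -[cardQ0].
    by move: cardQ; rewrite -cardQ0 mul0n leqn0 expn_eq0.
  by rewrite W0 card_vspace_F2 dimvf dim_bits => cardQs; move: ltQ; rewrite -cardQs ltnn.
have [WP0 WPT] := proper_space _ _ defP cardPQ.
have [WQ0 WQT] := proper_space _ _ defQ erefl.
have := f_sai.2.2 WP WQ WP0 WPT WQ0 WQT; rewrite -defP -defQ => /(_ fPQ) [eq_dim dimWP].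
have : (#|Q| * 2 ^ delta <= 2 ^ s)%N.
  by rewrite defQ card_vspace_F2 -eq_dim -expnD leq_exp2l //; lia.
have : (0 < 2 ^ delta)%N by rewrite expn_gt0.
rewrite cardQ1; nia.
Qed.
End SBox.

Section Bricks.

Variables b s : nat.
Local Notation V := (VV b s).

Lemma rowD (j : 'I_b) (x y : V) : row j (x + y) = row j x + row j y.
Proof. exact: raddfD. Qed.

Definition brick (j : 'I_b) (w : bits s) : V := \matrix_k (if k == j then w else 0).

Lemma row_brick k j w : row k (brick j w) = if k == j then w else 0.
Proof. exact: rowK. Qed.

Lemma brick0 j : brick j 0 = 0.
Proof. by apply/row_matrixP => k; rewrite row_brick row0 if_same. Qed.

Lemma brickD j : {morph brick j : u v / u + v}.
Proof.
by move=> u v; apply/row_matrixP => k; rewrite rowD !row_brick; case: eqP; rewrite ?addr0.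
Qed.

Lemma sum_brick_row (x : V) : x = \sum_j brick j (row j x).
Proof.
apply/row_matrixP => k; rewrite (big_morph (row k) (@rowD k) (row0 _ _ k)).
by rewrite (bigD1 k) //= big1 => [|j /negPf jk]; rewrite row_brick ?eqxx ?addr0 // eq_sym jk.
Qed.

Definition brick_support (X : {set V}) := [set j | [exists x in X, row j x != 0]].

Lemma wall_set0 : wall s set0 = [set 0 : V].
Proof.
apply/setP => x; rewrite in_set1 inE; apply/forallP/eqP => [x0 | -> j].
  by apply/(@row_matrixP _ b s) => j; rewrite row0; apply/eqP; move: (x0 j); rewrite inE.
by rewrite row0 eqxx implybT.
Qed.

Lemma wall_setT : wall s setT = [set: V].
Proof. by apply/setP => x; rewrite !inE; apply/forallP => j; rewrite inE. Qed.

Lemma wall_index_brick_support (X : {set V}) :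
  X = wall s (brick_support X) -> X != [set 0] -> X != setT -> is_wall_index (brick_support X).
Proof.
move=> XW Xn0 XnT; split; [apply: contraNneq Xn0 | apply: contraNneq XnT] => suppX.
- by rewrite XW suppX wall_set0.
- by rewrite XW suppX wall_setT.
Qed.

Lemma wall_sub_addr_closed (I : {set 'I_b}) (X : {set V}) :
  addr_closed X -> (forall j w, j \in I -> brick j w \in X) -> wall s I \subset X.
Proof.
move=> [X0 XD] IX; apply/subsetP => x /[!inE] /forallP xI; rewrite (sum_brick_row x).
apply: (big_ind [in X]) => // j _; have [/IX // | jI] := boolP (j \in I).
by move/implyP/(_ jI)/eqP: (xI j) ->; rewrite brick0.
Qed.

Lemma wall_brick_support (X : {set V}) :
  addr_closed X -> (forall j w, j \in brick_support X -> brick j w \in X) ->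
  X = wall s (brick_support X).
Proof.
move=> Xcl supX; apply/eqP; rewrite eqEsubset wall_sub_addr_closed // andbT.
apply/subsetP => x xX; rewrite inE; apply/forallP => j; apply/implyP; apply: contraNT => xj.
by rewrite inE; apply/exists_inP; exists x.
Qed.

(* Over F_2 this says f (y + X) \subset f y + Y: f maps every coset of X into a coset of Y. *)
Definition maps_cosets (f : V -> V) (X Y : {set V}) :=
  forall x y, x \in X -> f (y + x) + f y \in Y.

Lemma maps_cosets_card (f : {perm V}) X Y :
  f 0 = 0 -> maps_cosets f X Y -> (#|X| <= #|Y|)%N.
Proof.
move=> f0 fXY; rewrite -(card_imset X (@perm_inj _ f)); apply/subset_leq_card/subsetP.
by move=> _ /imsetP[x xX ->]; have := fXY x 0 xX; rewrite add0r f0 addr0.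
Qed.

End Bricks.

Section ParallelMap.

Variables (b s delta : nat) (g : {perm VV b s}) (S : 'I_b -> {perm bits s}).
Local Notation V := (VV b s).
Hypotheses (g_par : parallel_with g S) (lt_delta_s : (delta < s)%N).
Hypothesis S_good :
  forall j, diff_uniform (S j) (2 ^ delta) /\ strongly_anti_invariant delta.-1 (S j).

Let S0 j : S j 0 = 0. Proof. by have [_ [_ []]] := S_good j. Qed.

Lemma parallel0 : g 0 = 0.
Proof. by apply/row_matrixP => j; rewrite g_par !row0 S0. Qed.

Lemma parallel_brick j w : g (brick j w) = brick j (S j w).
Proof. by apply/row_matrixP => k; rewrite g_par !row_brick; case: eqP => [->|]. Qed.

Lemma parallel_brick_diff j w x :
  g (brick j w + x) + g (brick j w) + g x =
  brick j (S j (w + row j x) + S j w + S j (row j x)).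
Proof.
apply/row_matrixP => k; rewrite !rowD !g_par rowD !row_brick.
by case: eqP => [->|_]; rewrite ?add0r ?S0 ?addr0 ?addrr_F2.
Qed.

Variables X Z : {set V}.
Hypotheses (X_cl : addr_closed X) (Z_cl : addr_closed Z).
Hypotheses (gXZ : g @: X = Z) (g_cosets : maps_cosets g X Z).

Lemma parallel_brick_full j w :
  j \in brick_support X -> brick j w \in X /\ brick j w \in Z.
Proof.
rewrite inE => /exists_inP[x xX xj0]; have [[X0 XD] [Z0 ZD]] := (X_cl, Z_cl).
pose Xj := [set v | brick j v \in X]; pose Zj := [set v | brick j v \in Z].
have Xj_cl : addr_closed Xj by split=> [|u v]; rewrite !inE ?brick0 // brickD; apply: XD.
have Zj_cl : addr_closed Zj by split=> [|u v]; rewrite !inE ?brick0 // brickD; apply: ZD.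
have SXZ : S j @: Xj = Zj.
  apply/setP => v; rewrite inE -gXZ; apply/imsetP/imsetP => -[u].
    by rewrite inE => uX ->; exists (brick j u); rewrite ?parallel_brick.
  move=> uX def_v; exists ((S j)^-1 v)%g; rewrite ?permKV // inE.
  suff -> : brick j ((S j)^-1 v)%g = u by [].
  by apply: (@perm_inj _ g); rewrite parallel_brick permKV.
have diffZ x' v : x' \in X -> S j (v + row j x') + S j v + S j (row j x') \in Zj.
  move=> x'X; rewrite inE -parallel_brick_diff; apply: ZD; first exact: g_cosets.
  by rewrite -gXZ imset_f.
have [w0 t0] := diff_uniform_not_additive lt_delta_s (S_good j).1 xj0.
have /imsetP[a aX def_t] : S j (w0 + row j x) + S j w0 + S j (row j x) \in S j @: Xj.
  by rewrite SXZ diffZ.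
have a0 : a != 0 by apply: contraNneq t0 => a0; rewrite def_t a0 S0.
have diffa v : S j v + S j (v + a) \in Zj.
  have := Zj_cl.2 _ _ (diffZ _ v (_ : brick j a \in X)) (_ : S j a \in Zj).
  rewrite row_brick eqxx addrK_F2 addrC; apply.
  - by move: aX; rewrite inE.
  - by rewrite -SXZ imset_f.
have ZjT := sbox_image_full lt_delta_s (S_good j).1 (S_good j).2 Xj_cl Zj_cl SXZ a0 diffa.
have XjT : Xj = setT.
  apply/eqP; rewrite eqEcard subsetT cardsT -(card_imset Xj (@perm_inj _ (S j))) SXZ ZjT.
  by rewrite cardsT leqnn.
by split; [move: (in_setT w); rewrite -XjT | move: (in_setT w); rewrite -ZjT]; rewrite inE.
Qed.

Lemma parallel_wall : X = wall s (brick_support X) /\ Z = X.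
Proof.
have XW := wall_brick_support X_cl (fun j w jX => (parallel_brick_full w jX).1).
split=> //; apply/eqP; rewrite eq_sym eqEcard -[in A in (A <= _)%N]gXZ card_imset ?leqnn ?andbT.
  by rewrite {1}XW; apply: wall_sub_addr_closed => // j w /(parallel_brick_full w) [].
exact: perm_inj.
Qed.

End ParallelMap.

Section SPNRound.

Variables b s : nat.
Local Notation V := (VV b s).

Definition spn_round (rho : {perm V}) :=
  exists g l : {perm V}, rho = (g * l)%g /\
    (exists delta : nat, (delta < s)%N /\
       exists S : 'I_b -> {perm bits s}, parallel_with g S /\
         forall j, diff_uniform (S j) (2 ^ delta) /\ strongly_anti_invariant delta.-1 (S j)) /\
    strongly_proper l.

Lemma lin_map0 (l : {perm V}) : lin_map l -> l 0 = 0.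
Proof. by move=> l_lin; have := l_lin 0 0; rewrite addr0 => {1}->; rewrite addrr_F2. Qed.

Lemma spn_round0 rho : spn_round rho -> rho 0 = 0.
Proof.
move=> [g [l [-> [[delta [lt_ds [S [g_par S_good]]]] [l_lin _]]]]].
by rewrite permM (parallel0 g_par S_good) lin_map0.
Qed.

Lemma spn_round_not_additive rho c :
  spn_round rho -> c != 0 -> exists y, rho (y + c) + rho y + rho c != 0.
Proof.
move=> [g [l [-> [[delta [lt_ds [S [g_par S_good]]]] [l_lin _]]]]] c0.
have [j cj0] : exists j, row j c != 0.
  apply/existsP; apply: contraNT c0; rewrite negb_exists => /forallP c0.
  by apply/eqP/row_matrixP => j; rewrite row0; apply/eqP/negbNE.
have [w t0] := diff_uniform_not_additive lt_ds (S_good j).1 cj0.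
exists (brick j w); rewrite !permM -!l_lin (parallel_brick_diff g_par S_good).
apply: contra t0 => /eqP; rewrite -(lin_map0 l_lin) => /perm_inj/(congr1 (row j)).
by rewrite row_brick eqxx row0 => ->.
Qed.

Lemma spn_round_cosets_wall rho (X Y : {set V}) :
  spn_round rho -> addr_closed X -> addr_closed Y -> #|X| = #|Y| -> maps_cosets rho X Y ->
  exists2 l : {perm V}, strongly_proper l & X = wall s (brick_support X) /\ Y = l @: X.
Proof.
move=> [g [l [-> [[delta [lt_ds [S [g_par S_good]]]] l_sp]]]] X_cl [Y0 YD] cardXY rho_cos.
have [l_lin _] := l_sp; have l0 := lin_map0 l_lin.
pose Z := [set z | l z \in Y].
have Z_cl : addr_closed Z by split=> [|u v]; rewrite !inE ?l0 // l_lin; apply: YD.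
have g_cos : maps_cosets g X Z by move=> x y xX; rewrite inE l_lin -!permM rho_cos.
have gXZ : g @: X = Z.
  apply/eqP; rewrite eqEcard card_imset; last exact: perm_inj.
  rewrite cardXY -(card_preimset Y (@perm_inj _ l)) (eq_card (B := Z)) ?leqnn ?andbT => [|z].
    apply/subsetP => _ /imsetP[x xX ->].
    by have := g_cos x 0 xX; rewrite add0r (parallel0 g_par S_good) addr0.
  by rewrite !inE.
have [XW ZX] := parallel_wall g_par lt_ds S_good X_cl Z_cl gXZ g_cos.
exists l => //; split=> //; apply/setP => y; rewrite -ZX; apply/idP/imsetP => [yY | [z]].
  by exists (l^-1 y)%g; rewrite ?inE permKV.
by rewrite inE => zY ->.
Qed.

Lemma spn_round_cosets_cycle rho rho' (X Y : {set V}) :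
  spn_round rho -> spn_round rho' -> addr_closed X -> addr_closed Y ->
  maps_cosets rho X Y -> maps_cosets rho' Y X ->
  (X = [set 0] /\ Y = [set 0]) \/ (X = setT /\ Y = setT).
Proof.
move=> rho_spn rho'_spn X_cl Y_cl rhoXY rho'YX.
have cardXY : #|X| = #|Y|.
  apply/eqP; rewrite eqn_leq (maps_cosets_card (spn_round0 rho_spn)) //.
  exact: maps_cosets_card (spn_round0 rho'_spn) _.
have [X0 | Xn0] := eqVneq X [set 0].
  by left; split=> //; apply/eqP; rewrite (set1_card Y_cl.1) -cardXY X0 cards1.
have [XT | XnT] := eqVneq X setT.
  by right; split=> //; apply/eqP; rewrite setT_card -cardXY XT cardsT.
have Yn0 : Y != [set 0] by rewrite (set1_card Y_cl.1) -cardXY -(set1_card X_cl.1).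
have YnT : Y != setT by rewrite setT_card -cardXY -setT_card.
have [l l_sp [XW YlX]] := spn_round_cosets_wall rho_spn X_cl Y_cl cardXY rhoXY.
have [_ _ [YW _]] := spn_round_cosets_wall rho'_spn Y_cl X_cl (esym cardXY) rho'YX.
exfalso; apply: l_sp.2; exists (brick_support X), (brick_support Y).
split; first exact: wall_index_brick_support.
split; first exact: wall_index_brick_support.
by rewrite -XW -YW YlX.
Qed.

End SPNRound.

Section Feistel.

Variables b s : nat.
Local Notation V := (VV b s).
Implicit Types (rho : {perm V}) (U : {set V * V}).

Lemma pairD (p q : V * V) : p + q = (p.1 + q.1, p.2 + q.2).
Proof. by []. Qed.

Lemma addrr_F2xF2 (p : V * V) : p + p = 0.
Proof. by rewrite pairD !addrr_F2. Qed.

Definition lin_coset U v : {set V * V} := [set (u.1 + v.1, u.2 + v.2) | u in U].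

Lemma lin_coset_id U v : is_subgroup U -> v \in U -> lin_coset U v = U.
Proof.
move=> [U0 UD] vU; apply/setP => p; apply/imsetP/idP => [[u uU ->] | pU]; first exact: UD.
by exists (p + v); [apply: UD | rewrite /= !addrK_F2; case: p {pU}].
Qed.

Definition feistel_round rho U U' :=
  feistel rho @: U = U' /\ forall u y, u \in U -> feistel rho (u + y) + feistel rho y \in U'.

Lemma lin_partition_feistel_round rho U U' :
  rho 0 = 0 -> is_subgroup U -> is_subgroup U' ->
  part_image (lin_partition U) (feistel rho) = lin_partition U' -> feistel_round rho U U'.
Proof.
move=> rho0 U_sg [U0' UD'] FUU'.
have image_coset y : exists v, feistel rho @: lin_coset U y = lin_coset U' v.
  have : feistel rho @: lin_coset U y \in lin_partition U' by rewrite -FUU' !imset_f.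
  by case/imsetP => v _ ->; exists v.
have mem_coset u y : u \in U -> feistel rho (u + y) \in feistel rho @: lin_coset U y.
  by move=> uU; apply: imset_f; apply/imsetP; exists u.
have coset_sum y p q :
    p \in feistel rho @: lin_coset U y -> q \in feistel rho @: lin_coset U y -> p + q \in U'.
  have [v ->] := image_coset y; move=> /imsetP[u uU ->] /imsetP[u' u'U ->].
  by rewrite pairD /= addrACA addrr_F2 addr0 addrACA addrr_F2 addr0; apply: UD'.
split=> [|u y uU]; last first.
  by apply: (coset_sum y); [exact: mem_coset | rewrite -{1}[y]add0r; exact: mem_coset U_sg.1].
have [v Fv] := image_coset 0.
have F0 : feistel rho 0 = 0 by rewrite -[feistel _ _]/(0, 0 + rho 0) rho0 addr0.
have vU' : v \in U'.
  have : feistel rho 0 \in lin_coset U' v by rewrite -Fv -{1}[0]add0r; apply: mem_coset U_sg.1.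
  rewrite F0 => /imsetP[u uU' u0].
  by rewrite -[v]add0r -(addrr_F2xF2 u) -addrA [u + v]pairD -u0 addr0.
by move: Fv; rewrite !lin_coset_id ?U_sg.1.
Qed.

Definition Bset U : {set V} := [set u.2 | u in U].
Definition Cset U : {set V} := [set c | (c, 0) \in U].

Lemma mem_Aset U u : u \in U -> u.1 \in Aset U.
Proof. by move=> uU; rewrite inE; apply/existsP; exists u.2; case: u uU. Qed.

Lemma Cset_sub_Aset U : Cset U \subset Aset U.
Proof. by apply/subsetP => c; rewrite inE => /mem_Aset. Qed.

Lemma Dset_sub_Bset U : Dset U \subset Bset U.
Proof. by apply/subsetP => d; rewrite inE => /(imset_f snd). Qed.

Lemma Aset_addr_closed U : is_subgroup U -> addr_closed (Aset U).
Proof.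
move=> [U0 UD]; split=> [|x y]; first exact: mem_Aset U0.
rewrite !inE => /existsP[c xcU] /existsP[d ydU].
by apply/existsP; exists (c + d); exact: (UD _ _ xcU ydU).
Qed.

Lemma Bset_addr_closed U : is_subgroup U -> addr_closed (Bset U).
Proof.
move=> [U0 UD]; split=> [|_ _ /imsetP[u uU ->] /imsetP[v vU ->]]; first exact: imset_f U0.
by rewrite -[_ + _]/(u + v).2 imset_f //; apply: UD.
Qed.

Lemma Cset_addr_closed U : is_subgroup U -> addr_closed (Cset U).
Proof.
move=> [U0 UD]; split=> [|x y]; rewrite !inE // => xU yU.
by have := UD _ _ xU yU; rewrite /= addr0.
Qed.

Lemma Dset_addr_closed U : is_subgroup U -> addr_closed (Dset U).
Proof.
move=> [U0 UD]; split=> [|x y]; rewrite !inE // => xU yU.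
by have := UD _ _ xU yU; rewrite /= addr0.
Qed.

Lemma eq_pairs0 U :
  (0, 0) \in U -> Aset U = [set 0] -> Bset U = [set 0] -> U = [set (0, 0)].
Proof.
move=> U0 A0 B0; apply/setP => u; rewrite inE; apply/idP/eqP => [uU | ->] //.
have := mem_Aset uU; have := imset_f snd uU; rewrite -/(Bset U) A0 B0 !inE.
by case: u uU => u1 u2 _ /= /eqP-> /eqP->.
Qed.

Section FeistelRound.

Variables (rho : {perm V}) (U U' : {set V * V}).
Hypotheses (rho0 : rho 0 = 0) (U'_sg : is_subgroup U') (round : feistel_round rho U U').

Lemma feistel_round_mem u : u \in U -> feistel rho u \in U'.
Proof. by rewrite -round.1; apply: imset_f. Qed.

Lemma Aset_feistel_round : Aset U' = Bset U.
Proof.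
apply/setP => a; rewrite inE -round.1.
apply/existsP/imsetP => [[c /imsetP[u uU [-> _]]] | [u uU ->]]; first by exists u.
by exists (u.1 + rho u.2); apply: imset_f.
Qed.

Lemma Dset_feistel_round : Dset U' = Cset U.
Proof.
apply/setP => d; rewrite !inE -round.1; apply/imsetP/idP => [[u uU [u20 ->]] | dU].
  by rewrite -u20 rho0 addr0 u20; case: u uU {u20}.
by exists (d, 0); rewrite // /feistel /= rho0 addr0.
Qed.

Lemma Bset_feistel_round x y : x \in Bset U -> rho (y + x) + rho y + rho x \in Dset U'.
Proof.
case/imsetP => u uU ->; rewrite inE; have [_ UD'] := U'_sg.
have := UD' _ _ (round.2 u (0, y) uU) (feistel_round_mem uU).
by rewrite pairD /feistel /= addr0 add0r addrK_F2 addrr_F2 addrACA [u.1 + _ + u.1]addrAC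
  addrr_F2 add0r addrA (addrC y).
Qed.

End FeistelRound.

Lemma eq_pairsT U :
  is_subgroup U -> Aset U = setT -> Dset U = setT -> U = setT.
Proof.
move=> [_ UD] AT DT; apply/setP => -[p q]; rewrite inE.
have /[!inE] /existsP[c pcU] : p \in Aset U by rewrite AT inE.
have /[!inE] qcU : q + c \in Dset U by rewrite DT inE.
by have := UD _ _ pcU qcU; rewrite /= addr0 addrC addrK_F2.
Qed.

Lemma Bset_product U :
  is_subgroup U -> U = setX (Aset U) (Dset U) -> Bset U = Dset U.
Proof.
move=> [U0 _] defU; apply/setP => d; apply/imsetP/idP => [[[u1 u2] + ->] | dD].
  by rewrite {1}defU in_setX => /andP[].
by exists (0, d); rewrite // {1}defU in_setX dD (mem_Aset U0).
Qed.

Lemma Cset_product U :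
  is_subgroup U -> U = setX (Aset U) (Dset U) -> Cset U = Aset U.
Proof.
move=> [U0 _] defU; apply/eqP; rewrite eqEsubset Cset_sub_Aset.
by apply/subsetP => a aA; rewrite inE defU in_setX aA inE.
Qed.

Section TwoRounds.

Variables (rho rho' : {perm V}) (U U' : {set V * V}).
Hypotheses (rho0 : rho 0 = 0) (rho'0 : rho' 0 = 0).
Hypotheses (U_sg : is_subgroup U) (U'_sg : is_subgroup U').
Hypotheses (round : feistel_round rho U U') (round' : feistel_round rho' U' U).

Lemma feistel_round2_Bset : maps_cosets rho (Bset U) (Aset U).
Proof.
move=> x y xB; have [_ AD] := Aset_addr_closed U_sg.
have rhoxA : rho x \in Aset U.
  case/imsetP: xB => u uU ->.
  have : u.1 + rho u.2 \in Aset U.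
    by rewrite (Aset_feistel_round round'); move: (imset_f snd (feistel_round_mem round uU)).
  by move/(AD _ _ (mem_Aset uU)); rewrite addKr_F2.
have := Bset_feistel_round U'_sg round y xB.
rewrite (Dset_feistel_round rho0 round) => /(subsetP (Cset_sub_Aset U)) /AD /(_ rhoxA).
by rewrite addrK_F2.
Qed.

Lemma feistel_round2_Dset : maps_cosets rho (Dset U) (Cset U).
Proof.
move=> x y xD; have [_ CD] := Cset_addr_closed U_sg; have [_ UD'] := U'_sg.
have rhoxC : rho x \in Cset U.
  rewrite -(Dset_feistel_round rho0 round) inE.
  have x0U' : (x, 0) \in U' by move: xD; rewrite (Dset_feistel_round rho'0 round') inE.
  have x0U : (0, x) \in U by move: xD; rewrite inE.
  by have := UD' _ _ x0U' (feistel_round_mem round x0U); rewrite /= addrr_F2 !add0r.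
have := Bset_feistel_round U'_sg round y (subsetP (Dset_sub_Bset U) _ xD).
rewrite (Dset_feistel_round rho0 round) => /CD /(_ rhoxC).
by rewrite addrK_F2.
Qed.

End TwoRounds.

Lemma feistel_round_product rho U U' :
  rho 0 = 0 -> is_subgroup U' -> feistel_round rho U U' ->
  U' = setX (Aset U') (Dset U') -> maps_cosets rho (Dset U) (Dset U').
Proof.
move=> rho0 U'_sg round defU' x y xD; have [_ DD] := Dset_addr_closed U'_sg.
have rhoxD : rho x \in Dset U'.
  have x0U : (0, x) \in U by move: xD; rewrite inE.
  by have := feistel_round_mem round x0U; rewrite {1}defU' in_setX /feistel /= add0r => /andP[].
have := Bset_feistel_round U'_sg round y (subsetP (Dset_sub_Bset U) _ xD).
by move=> /DD /(_ rhoxD); rewrite addrK_F2.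
Qed.

End Feistel.

Section Conditions.

Variables b s : nat.
Local Notation V := (VV b s).
Implicit Types (rho : {perm V}) (U : {set V * V}).

Lemma feistel_round_Dset_neq0 rho U U' :
  spn_round rho -> is_subgroup U -> is_subgroup U' -> feistel_round rho U U' ->
  U != [set (0, 0)] -> Dset U' != [set 0].
Proof.
move=> rho_spn U_sg U'_sg round Un0; have rho0 := spn_round0 rho_spn.
have [u uU u0] : exists2 u, u \in U & u != (0, 0).
  apply/exists_inP; apply: contraNT Un0; rewrite negb_exists_in => /forall_inP Ueq0.
  by apply/eqP/setP => v; rewrite inE; apply/idP/eqP => [/Ueq0/negPn/eqP | ->] //; case: U_sg.
apply/eqP => D0; have [u2_0 | u2_n0] := eqVneq u.2 0.
  have : u.1 \in Cset U by rewrite inE -u2_0; case: u uU {u0 u2_0}.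
  rewrite -(Dset_feistel_round rho0 round) D0 inE => /eqP u1_0.
  by move: u0 u1_0 u2_0; case: u {uU} => u1 u2 /= u0 u1_0 u2_0; rewrite u1_0 u2_0 eqxx in u0.
have [y] := spn_round_not_additive rho_spn u2_n0.
by have := Bset_feistel_round U'_sg round y (imset_f snd uU); rewrite D0 inE => ->.
Qed.

Lemma feistel_round_Aset_eq0 rho U U' :
  is_subgroup U -> feistel_round rho U U' ->
  Aset U = [set 0] -> Aset U' = [set 0] -> U = [set (0, 0)].
Proof.
by move=> [U0 _] round A0 A'0; apply: eq_pairs0 U0 A0 _; rewrite -(Aset_feistel_round round).
Qed.

Lemma feistel_round_not_reversed rho rho' U U' :
  spn_round rho -> spn_round rho' -> is_subgroup U -> is_subgroup U' ->
  feistel_round rho U U' -> feistel_round rho' U' U -> ~ proper_nontrivial U.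
Proof.
move=> spn spn' U_sg U'_sg round round' [Un0 UnT].
have [rho0 rho'0] := (spn_round0 spn, spn_round0 spn').
have AB' := Aset_feistel_round round'; have A'B := Aset_feistel_round round.
have CD' := Dset_feistel_round rho'0 round'; have C'D := Dset_feistel_round rho0 round.
have BA_cos := feistel_round2_Bset rho0 U_sg U'_sg round round'.
have AB_cos := feistel_round2_Bset rho'0 U'_sg U_sg round' round; rewrite -AB' A'B in AB_cos.
have DC_cos := feistel_round2_Dset rho0 rho'0 U_sg U'_sg round round'.
have CD_cos := feistel_round2_Dset rho'0 rho0 U'_sg U_sg round' round; rewrite C'D -CD' in CD_cos.
have [[B0 A0] | [_ AT]] :=
  spn_round_cosets_cycle spn spn' (Bset_addr_closed U_sg) (Aset_addr_closed U_sg) BA_cos AB_cos.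
  by move/eqP: Un0; apply; apply: eq_pairs0 U_sg.1 A0 B0.
have [[D0 C0] | [DT _]] :=
  spn_round_cosets_cycle spn spn' (Dset_addr_closed U_sg) (Cset_addr_closed U_sg) DC_cos CD_cos.
  by move/negP: (feistel_round_Dset_neq0 spn U_sg U'_sg round Un0); rewrite C'D C0 eqxx.
by move/eqP: UnT; apply; apply: eq_pairsT.
Qed.

Lemma feistel_rounds_not_products rho rho' U1 U2 U3 :
  spn_round rho -> spn_round rho' -> is_subgroup U1 -> is_subgroup U2 -> is_subgroup U3 ->
  feistel_round rho U1 U2 -> feistel_round rho' U2 U3 ->
  U1 = setX (Aset U1) (Dset U1) -> U2 = setX (Aset U2) (Dset U2) ->
  U3 = setX (Aset U3) (Dset U3) -> ~ proper_nontrivial U1.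
Proof.
move=> spn spn' sg1 sg2 sg3 round1 round2 P1 P2 P3 [Un0 UnT].
have [rho0 rho'0] := (spn_round0 spn, spn_round0 spn').
have D2A1 : Dset U2 = Aset U1 by rewrite (Dset_feistel_round rho0 round1) (Cset_product sg1 P1).
have D3D1 : Dset U3 = Dset U1.
  by rewrite (Dset_feistel_round rho'0 round2) (Cset_product sg2 P2) (Aset_feistel_round round1)
    (Bset_product sg1 P1).
have cos12 := feistel_round_product rho0 sg2 round1 P2.
have cos21 := feistel_round_product rho'0 sg3 round2 P3; rewrite D3D1 in cos21.
have [[D0 A0] | [DT AT]] :=
  spn_round_cosets_cycle spn spn' (Dset_addr_closed sg1) (Dset_addr_closed sg2) cos12 cos21.
  move/eqP: Un0; apply; apply/setP => -[p q].
  by rewrite {1}P1 in_setX -D2A1 A0 D0 !inE xpair_eqE.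
by move/eqP: UnT; apply; apply: eq_pairsT; rewrite -?D2A1.
Qed.

End Conditions.

Theorem theorem4p10 (b s r : nat)
  (rho gam lam : nat -> {perm VV b s})
  (U : nat -> {set VV b s * VV b s}) :
  (2 <= r)%N ->
  (forall i, (1 <= i <= r)%N ->
     rho i 0 = 0 /\ rho i = (gam i * lam i)%g /\
     (exists delta : nat, (delta < s)%N /\
        exists S : 'I_b -> {perm bits s}, parallel_with (gam i) S /\
          forall j, diff_uniform (S j) (2 ^ delta) /\
                    strongly_anti_invariant delta.-1 (S j)) /\
     strongly_proper (lam i)) ->
  (forall i, (1 <= i <= r.+1)%N -> is_subgroup (U i) /\ proper_nontrivial (U i)) ->
  (forall i, (1 <= i <= r)%N ->
     part_image (lin_partition (U i)) (feistel (rho i)) = lin_partition (U i.+1)) ->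
  ~ [\/ (exists i, (1 <= i <= r.-1)%N /\
          part_image (lin_partition (U i.+1)) (feistel (rho i.+1)) = lin_partition (U i)),
        (exists i, (1 <= i <= r.-1)%N /\
          U i = setX (Aset (U i)) (Dset (U i)) /\
          U i.+1 = setX (Aset (U i.+1)) (Dset (U i.+1)) /\
          U i.+2 = setX (Aset (U i.+2)) (Dset (U i.+2))),
        (exists i, (1 <= i <= r)%N /\ Dset (U i) = [set 0] /\ Dset (U i.+1) = [set 0])
      | (exists i, (1 <= i <= r)%N /\ Aset (U i) = [set 0] /\ Aset (U i.+1) = [set 0])].
Proof.
move=> r2 Hrho HU Hpart.
have spn i : (1 <= i <= r)%N -> spn_round (rho i).
  by case/Hrho => _ [rho_gl [gam_par lam_sp]]; exists (gam i), (lam i).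
have U_sg i : (1 <= i <= r.+1)%N -> is_subgroup (U i) by case/HU.
have nontriv i : (1 <= i <= r.+1)%N -> proper_nontrivial (U i) by case/HU.
have round i j : (1 <= i <= r)%N -> (1 <= j <= r.+1)%N ->
    part_image (lin_partition (U i)) (feistel (rho i)) = lin_partition (U j) ->
    feistel_round (rho i) (U i) (U j).
  move=> ir jr; apply: lin_partition_feistel_round (spn_round0 (spn i ir)) (U_sg i _) (U_sg j jr).
  lia.
case=> [[i [ir E]] | [i [ir [P1 [P2 P3]]]] | [i [ir [_ D0]]] | [i [ir [A0 A'0]]]].
- have [i1 i2] : (1 <= i <= r)%N /\ (1 <= i.+1 <= r)%N by lia.
  by apply: feistel_round_not_reversed (spn i i1) (spn i.+1 i2) (U_sg i _) (U_sg i.+1 _)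
    (round i i.+1 i1 _ (Hpart i i1)) (round i.+1 i i2 _ E) (nontriv i _); lia.
- have [i1 i2] : (1 <= i <= r)%N /\ (1 <= i.+1 <= r)%N by lia.
  by apply: feistel_rounds_not_products (spn i i1) (spn i.+1 i2) (U_sg i _) (U_sg i.+1 _)
    (U_sg i.+2 _) (round i i.+1 i1 _ (Hpart i i1)) (round i.+1 i.+2 i2 _ (Hpart i.+1 i2))
    P1 P2 P3 (nontriv i _); lia.
- have [i1 i2] : (1 <= i <= r.+1)%N /\ (1 <= i.+1 <= r.+1)%N by lia.
  have := feistel_round_Dset_neq0 (spn i ir) (U_sg i i1) (U_sg i.+1 i2)
    (round i i.+1 ir i2 (Hpart i ir)) (nontriv i i1).1.
  by rewrite D0 eqxx.
- have [i1 i2] : (1 <= i <= r.+1)%N /\ (1 <= i.+1 <= r.+1)%N by lia.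
  have [/eqP Un0 _] := nontriv i i1; apply: Un0.
  exact: feistel_round_Aset_eq0 (U_sg i i1) (round i i.+1 ir i2 (Hpart i ir)) A0 A'0.
Qed.
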